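(* Let $X=\bigcup_{w\in W}V_w$. The translates $\lambda+X$, $\lambda\in\Lambda$, are pairwise disjoint.
   Context: $V$ is a finite-dimensional real Euclidean space, $W$ an irreducible Weyl group acting linearly on $V$ with simple roots $\alpha_1,\dots,\alpha_l$, highest root $\alpha_{\max}$, $\alpha_0:=-\alpha_{\max}$, $\alpha^\vee=2\alpha/\langle\alpha,\alpha\rangle$. $\Lambda=\mathbb Z[\alpha_1^\vee,\dots,\alpha_l^\vee]$ is the coroot lattice. Alcove $A=\{x\mid\langle\alpha_i,x\rangle+\delta_{i,0}>0,\ i=0,\dots,l\}$. For $w\in W$, $V_w=(\mathrm{id}-w)(A)=\{x-w(x)\mid x\in A\}$. *)

From HB Require Import structures.
From mathcomp Require Import all_boot all_order all_algebra.
Set Implicit Arguments. Unset Strict Implicit. Unset Printing Implicit Defensive.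
Import Order.TTheory GRing.Theory Num.Theory.
Local Open Scope ring_scope.

Section RootData.
Variables (R : realFieldType) (n : nat).
Local Notation V := 'rV[R]_n.

Definition dot (u v : V) : R := (u *m v^T) 0 0.

Definition coroot (a : V) : V := (2 / dot a a) *: a.

Definition refl (a : V) (x : V) : V := x - dot (coroot a) x *: a.

Definition is_root_system (Phi : seq V) : Prop :=
  [/\ (0 : V) \notin Phi,
      (forall a b, a \in Phi -> b \in Phi -> refl a b \in Phi),
      (forall a b, a \in Phi -> b \in Phi ->
         exists z : int, dot (coroot a) b = z%:~R) &
      (forall a (c : R), a \in Phi -> c *: a \in Phi -> c = 1 \/ c = -1)].

Definition irreducible_rs (Phi : seq V) : Prop :=
  forall P : pred V,
    (exists2 a, a \in Phi & P a) -> (exists2 b, b \in Phi & ~~ P b) ->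
    exists a b, [/\ a \in Phi, b \in Phi, P a, ~~ P b & dot a b != 0].

Definition simple_roots (Phi : seq V) (alpha : 'I_n -> V) : Prop :=
  [/\ (forall i, alpha i \in Phi),
      row_free (\matrix_(i < n) alpha i) &
      (forall b, b \in Phi -> exists c : 'I_n -> int,
          b = \sum_(i < n) alpha i *~ c i /\
          ((forall i, 0 <= c i) \/ (forall i, c i <= 0)))].

Definition highest_root (Phi : seq V) (alpha : 'I_n -> V) (amax : V) : Prop :=
  amax \in Phi /\
  forall b, b \in Phi -> exists c : 'I_n -> int,
    (forall i, 0 <= c i) /\ amax - b = \sum_(i < n) alpha i *~ c i.

Definition weyl_act (s : seq V) (x : V) : V := foldr refl x s.

Definition in_weyl (Phi : seq V) (w : V -> V) : Prop :=
  exists2 s : seq V, all (fun a => a \in Phi) s & w =1 weyl_act s.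

Definition in_coroot_lattice (alpha : 'I_n -> V) (lam : V) : Prop :=
  exists k : 'I_n -> int, lam = \sum_(i < n) coroot (alpha i) *~ k i.

(* fundamental alcove A (with alpha_0 = - amax) *)
Definition in_alcove (alpha : 'I_n -> V) (amax : V) (x : V) : Prop :=
  (forall i, 0 < dot (alpha i) x) /\ 0 < dot (- amax) x + 1.

Definition in_Vw (alpha : 'I_n -> V) (amax : V) (w : V -> V) (y : V) : Prop :=
  exists2 x, in_alcove alpha amax x & y = x - w x.

Definition in_X (Phi : seq V) (alpha : 'I_n -> V) (amax : V) (y : V) : Prop :=
  exists2 w, in_weyl Phi w & in_Vw alpha amax w y.

End RootData.

From Pilot Require Import Defs.
From HB Require Import structures.
From mathcomp Require Import all_boot all_order all_algebra ring.
Set Implicit Arguments. Unset Strict Implicit. Unset Printing Implicit Defensive.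
Import Order.TTheory GRing.Theory Num.Theory.
Local Open Scope ring_scope.

(* Suppose [y - lam = x - w x] and [y - mu = x' - w' x'] with [x, x'] in the
   alcove [A].  Then [x - (w^-1 w' x' + w^-1 (lam - mu)) = w^-1 (x - x')], so
   the point [w^-1 w' x' + w^-1 (lam - mu)] of the orbit of [x'] under the
   affine Weyl group [W |x Lambda] is exactly as far from [x] as [x'] is.  The
   core of the proof is that [x'] is the point of this orbit closest to [x],
   strictly so as soon as the translation part is nonzero; hence [lam = mu]. *)

Section InnerProduct.
Variables (R : realFieldType) (n : nat).
Local Notation V := 'rV[R]_n.
Local Notation dot := (@dot R n).

Lemma dotE (u v : V) : dot u v = \sum_j u 0 j * v 0 j.
Proof. by rewrite /Defs.dot mxE; apply: eq_bigr => j _; rewrite mxE. Qed.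

Lemma dotC (u v : V) : dot u v = dot v u.
Proof. by rewrite !dotE; apply: eq_bigr => j _; rewrite mulrC. Qed.

Lemma dotDl (u v w : V) : dot (u + v) w = dot u w + dot v w.
Proof. by rewrite !dotE -big_split; apply: eq_bigr => j _; rewrite mxE mulrDl. Qed.

Lemma dotZl a (u w : V) : dot (a *: u) w = a * dot u w.
Proof. by rewrite !dotE mulr_sumr; apply: eq_bigr => j _; rewrite mxE mulrA. Qed.

Lemma dotNl (u w : V) : dot (- u) w = - dot u w.
Proof. by rewrite -scaleN1r dotZl mulN1r. Qed.

Lemma dotBl (u v w : V) : dot (u - v) w = dot u w - dot v w.
Proof. by rewrite dotDl dotNl. Qed.

Lemma dot0l (w : V) : dot 0 w = 0.
Proof. by rewrite -(scale0r (0 : V)) dotZl mul0r. Qed.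

Lemma dotzl (u w : V) (z : int) : dot (u *~ z) w = dot u w *~ z.
Proof. by rewrite -scaler_int dotZl mulrzl. Qed.

Lemma dot_suml I (r : seq I) (F : I -> V) w :
  dot (\sum_(i <- r) F i) w = \sum_(i <- r) dot (F i) w.
Proof.
elim: r => [|a r IH]; first by rewrite !big_nil dot0l.
by rewrite !big_cons dotDl IH.
Qed.

Lemma dotDr (u v w : V) : dot w (u + v) = dot w u + dot w v.
Proof. by rewrite dotC dotDl !(dotC w). Qed.

Lemma dotZr a (u w : V) : dot w (a *: u) = a * dot w u.
Proof. by rewrite dotC dotZl dotC. Qed.

Lemma dotNr (u w : V) : dot w (- u) = - dot w u.
Proof. by rewrite dotC dotNl dotC. Qed.

Lemma dotBr (u v w : V) : dot w (u - v) = dot w u - dot w v.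
Proof. by rewrite dotDr dotNr. Qed.

Lemma dot0r (w : V) : dot w 0 = 0.
Proof. by rewrite dotC dot0l. Qed.

Lemma dot_sumr I (r : seq I) (F : I -> V) w :
  dot w (\sum_(i <- r) F i) = \sum_(i <- r) dot w (F i).
Proof. by rewrite dotC dot_suml; apply: eq_bigr => i _; apply: dotC. Qed.

Lemma dot_ge0 (u : V) : 0 <= dot u u.
Proof. by rewrite dotE; apply: sumr_ge0 => j _; rewrite -expr2 sqr_ge0. Qed.

Lemma dot_eq0 (u : V) : (dot u u == 0) = (u == 0).
Proof.
apply/idP/idP; last by move/eqP->; rewrite dot0l.
rewrite dotE psumr_eq0 => [/allP H|j _]; last by rewrite -expr2 sqr_ge0.
apply/eqP/rowP => j; rewrite mxE.
by have := H j (mem_index_enum j); rewrite -expr2 sqrf_eq0 => /eqP.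
Qed.

Lemma dot_gt0 (u : V) : u != 0 -> 0 < dot u u.
Proof. by move=> u_nz; rewrite lt_def dot_eq0 u_nz dot_ge0. Qed.

Lemma dot_add_scale (u v : V) f :
  dot (u + f *: v) (u + f *: v) = dot u u + f * (2 * dot u v + f * dot v v).
Proof.
rewrite dotDl !dotDr !dotZl !dotZr (dotC v u) mulr_natl mulr2n !mulrDr !addrA.
by rewrite mulrA.
Qed.

End InnerProduct.

Section Reflections.
Variables (R : realFieldType) (n : nat).
Local Notation V := 'rV[R]_n.
Local Notation dot := (@dot R n).
Local Notation coroot := (@coroot R n).
Local Notation refl := (@refl R n).

Lemma dot_corootl (a u : V) : dot (coroot a) u = 2 / dot a a * dot a u.
Proof. by rewrite /coroot dotZl. Qed.

Lemma dot_corootr (a u : V) : dot u (coroot a) = 2 / dot a a * dot u a.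
Proof. by rewrite /coroot dotZr. Qed.

Lemma dot_coroot_self (a : V) : a != 0 -> dot (coroot a) a = 2.
Proof. by move=> a_nz; rewrite dot_corootl mulfVK // dot_eq0. Qed.

Lemma corootN (a : V) : coroot (- a) = - coroot a.
Proof. by rewrite /coroot dotNl dotNr opprK scalerN. Qed.

Lemma reflE (a x : V) : refl a x = x - dot a x *: coroot a.
Proof. by rewrite /Defs.refl dot_corootl /coroot scalerA mulrC. Qed.

Lemma reflD a (u v : V) : refl a (u + v) = refl a u + refl a v.
Proof. by rewrite /Defs.refl dotDr scalerDl opprD addrACA. Qed.

Lemma reflZ a c (u : V) : refl a (c *: u) = c *: refl a u.
Proof. by rewrite /Defs.refl dotZr scalerBr scalerA. Qed.

Lemma reflN a (u : V) : refl a (- u) = - refl a u.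
Proof. by rewrite -scaleN1r reflZ scaleN1r. Qed.

Lemma reflB a (u v : V) : refl a (u - v) = refl a u - refl a v.
Proof. by rewrite reflD reflN. Qed.

Lemma refl0 a : refl a 0 = 0.
Proof. by rewrite /Defs.refl dot0r scale0r subr0. Qed.

Lemma refl_negroot (a u : V) : refl (- a) u = refl a u.
Proof. by rewrite /Defs.refl corootN dotNl scaleNr scalerN opprK. Qed.

Lemma refl_self (a : V) : a != 0 -> refl a a = - a.
Proof.
move=> a_nz; rewrite /Defs.refl dot_coroot_self // scaler_nat.
by rewrite mulr2n opprD addNKr.
Qed.

Lemma reflK (a : V) : a != 0 -> involutive (refl a).
Proof.
move=> a_nz u; rewrite {2}/Defs.refl reflB reflZ refl_self //.
by rewrite scalerN opprK /Defs.refl subrK.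
Qed.

Lemma refl_coroot_self (a : V) : a != 0 -> refl a (coroot a) = - coroot a.
Proof. by move=> a_nz; rewrite /coroot reflZ refl_self // scalerN. Qed.

Lemma dot_refl_sym (a u v : V) : dot (refl a u) v = dot u (refl a v).
Proof.
rewrite /Defs.refl dotBl dotBr dotZl dotZr !dot_corootl.
by rewrite (dotC u a) -!mulrA [dot a v * _]mulrC.
Qed.

Lemma dot_refl (a u v : V) : a != 0 -> dot (refl a u) (refl a v) = dot u v.
Proof. by move=> a_nz; rewrite dot_refl_sym reflK. Qed.

Lemma coroot_refl (a b : V) : a != 0 -> coroot (refl a b) = refl a (coroot b).
Proof. by move=> a_nz; rewrite /coroot dot_refl // reflZ. Qed.

Lemma refl_conj (a b u : V) : a != 0 ->
  refl (refl a b) (refl a u) = refl a (refl b u).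
Proof.
move=> a_nz; rewrite {1}/Defs.refl coroot_refl // dot_refl //.
by rewrite reflB reflZ.
Qed.

End Reflections.

Section WeylWords.
Variables (R : realFieldType) (n : nat).
Local Notation V := 'rV[R]_n.
Local Notation dot := (@dot R n).
Local Notation coroot := (@coroot R n).
Local Notation refl := (@refl R n).
Local Notation wa := (@weyl_act R n).

Definition nonzero_word (s : seq V) := all (fun a => a != 0) s.

Lemma wa_cat s1 s2 (x : V) : wa (s1 ++ s2) x = wa s1 (wa s2 x).
Proof. by rewrite /weyl_act foldr_cat. Qed.

Lemma wa_rcons s a (x : V) : wa (rcons s a) x = wa s (refl a x).
Proof. by rewrite -cats1 wa_cat. Qed.

Lemma waD s (u v : V) : wa s (u + v) = wa s u + wa s v.
Proof. by elim: s => //= a s IH; rewrite IH reflD. Qed.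

Lemma waZ s c (u : V) : wa s (c *: u) = c *: wa s u.
Proof. by elim: s => //= a s IH; rewrite IH reflZ. Qed.

Lemma waN s (u : V) : wa s (- u) = - wa s u.
Proof. by rewrite -scaleN1r waZ scaleN1r. Qed.

Lemma waB s (u v : V) : wa s (u - v) = wa s u - wa s v.
Proof. by rewrite waD waN. Qed.

Lemma wa0 s : wa s 0 = 0.
Proof. by elim: s => //= a s IH; rewrite IH refl0. Qed.

Lemma nonzero_word_rev s : nonzero_word s -> nonzero_word (rev s).
Proof. by rewrite /nonzero_word all_rev. Qed.

Lemma dot_wa_sym s (u v : V) : dot (wa s u) v = dot u (wa (rev s) v).
Proof. by elim: s u v => //= a s IH u v; rewrite dot_refl_sym IH rev_cons wa_rcons. Qed.

Lemma waK s : nonzero_word s -> cancel (wa s) (wa (rev s)).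
Proof.
elim: s => //= a s IH /andP[a_nz s_nz] x.
by rewrite rev_cons wa_rcons reflK // IH.
Qed.

Lemma wa_eq0 s (v : V) : nonzero_word s -> (wa s v == 0) = (v == 0).
Proof. by move=> s_nz; rewrite -{1}(wa0 s) (inj_eq (can_inj (waK s_nz))). Qed.

Lemma dot_wa s (u v : V) : nonzero_word s -> dot (wa s u) (wa s v) = dot u v.
Proof. by move=> s_nz; rewrite dot_wa_sym waK. Qed.

Lemma coroot_wa s (b : V) : nonzero_word s -> coroot (wa s b) = wa s (coroot b).
Proof. by elim: s => //= a s IH /andP[a_nz s_nz]; rewrite coroot_refl // IH. Qed.

Lemma wa_conj s (b u : V) : nonzero_word s ->
  refl (wa s b) (wa s u) = wa s (refl b u).
Proof. by elim: s => //= a s IH /andP[a_nz s_nz]; rewrite refl_conj // IH. Qed.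

End WeylWords.

(* Two negative integers whose product is less than 4: one of them is -1.
   Applied to the Cartan integers of two roots forming an obtuse angle. *)
Lemma int_neg_prod_lt4 (a b : int) : a < 0 -> b < 0 -> a * b < 4 -> a = -1 \/ b = -1.
Proof.
case: a => [k|k]; first by rewrite ltNge.
case: b => [k'|k'] _; first by rewrite ltNge.
move=> _; rewrite !NegzE mulrNN -PoszM ltz_nat.
case: k => [|k]; first by left.
case: k' => [|k']; first by right.
by rewrite ltnNge (@leq_mul 2 2).
Qed.

Section RootSystem.
Variables (R : realFieldType) (n : nat) (Phi : seq 'rV[R]_n).
Hypothesis rsPhi : is_root_system Phi.
Local Notation V := 'rV[R]_n.
Local Notation dot := (@dot R n).
Local Notation coroot := (@coroot R n).
Local Notation refl := (@refl R n).
Local Notation wa := (@weyl_act R n).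

Lemma root_nz b : b \in Phi -> b != 0.
Proof. by case: rsPhi => Phi_nz _ _ _ bPhi; apply: contraNneq Phi_nz => <-. Qed.

Lemma refl_root a b : a \in Phi -> b \in Phi -> refl a b \in Phi.
Proof. by case: rsPhi => _ reflPhi _ _; apply: reflPhi. Qed.

Lemma opp_root b : b \in Phi -> - b \in Phi.
Proof. by move=> bPhi; rewrite -refl_self ?root_nz // refl_root. Qed.

Lemma root_pairing_int a b : a \in Phi -> b \in Phi ->
  exists z : int, dot (coroot a) b = z%:~R.
Proof. by case: rsPhi => _ _ intPhi _; apply: intPhi. Qed.

Lemma root_reduced a (c : R) : a \in Phi -> c *: a \in Phi -> c = 1 \/ c = -1.
Proof. by case: rsPhi => _ _ _ redPhi; apply: redPhi. Qed.

Lemma root_norm_gt0 b : b \in Phi -> 0 < dot b b.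
Proof. by move=> bPhi; apply/dot_gt0/root_nz. Qed.

Definition root_word (s : seq V) := all (fun a => a \in Phi) s.

Lemma root_word_nonzero s : root_word s -> nonzero_word s.
Proof. by move/allP=> sPhi; apply/allP=> a /sPhi; apply: root_nz. Qed.

Lemma root_word_rev s : root_word s -> root_word (rev s).
Proof. by rewrite /root_word all_rev. Qed.

Lemma root_word_cat s1 s2 : root_word s1 -> root_word s2 -> root_word (s1 ++ s2).
Proof. by rewrite /root_word all_cat => -> ->. Qed.

Lemma wa_root s b : root_word s -> b \in Phi -> wa s b \in Phi.
Proof. by elim: s => //= a s IH /andP[aPhi sPhi] bPhi; apply/refl_root/IH. Qed.

Lemma root_word_map s g : root_word s -> root_word g -> root_word (map (wa s) g).
Proof.
by move=> sPhi /allP gPhi; apply/allP => _ /mapP[b /gPhi bPhi ->]; apply: wa_root.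
Qed.

Definition csum (g : seq V) := \sum_(t <- g) coroot t.

Lemma csum_wa s g : nonzero_word s -> wa s (csum g) = csum (map (wa s) g).
Proof.
elim: g => [|b g IH] s_nz; first by rewrite /csum !big_nil wa0.
by rewrite /csum !big_cons waD -!/(csum _) IH // coroot_wa.
Qed.

(* Strict Cauchy-Schwarz for two roots which are not opposite and form an
   obtuse angle (they are not proportional, by reducedness). *)
Lemma root_cauchy_schwarz (h t : V) : h \in Phi -> t \in Phi -> t != - h ->
  dot h t < 0 -> dot h t * dot h t < dot h h * dot t t.
Proof.
move=> hPhi tPhi t_neq dot_lt0.
have hh_gt0 := root_norm_gt0 hPhi; have hh_nz := lt0r_neq0 hh_gt0.
pose c := dot h t / dot h h.
have t_indep : t - c *: h != 0.
  rewrite subr_eq0; apply: contraTneq dot_lt0 => t_eq.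
  have [c1|cN1] : c = 1 \/ c = -1 by apply: (root_reduced hPhi); rewrite -t_eq.
    by rewrite t_eq c1 scale1r -leNgt dot_ge0.
  by move: t_neq; rewrite t_eq cN1 scaleN1r eqxx.
have norm_indep : dot (t - c *: h) (t - c *: h) = dot t t - dot h t * dot h t / dot h h.
  by rewrite dotBl !dotBr !dotZl !dotZr (dotC t h) /c; field.
have := dot_gt0 t_indep.
by rewrite norm_indep subr_gt0 ltr_pdivrMr // [dot t t * _]mulrC.
Qed.

Lemma coroot_add (h t : V) : h \in Phi -> t \in Phi -> t != - h ->
  dot h (coroot t) < 0 -> exists2 d, d \in Phi & coroot d = coroot h + coroot t.
Proof.
move=> hPhi tPhi t_neq.
have hh_gt0 := root_norm_gt0 hPhi; have tt_gt0 := root_norm_gt0 tPhi.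
rewrite dot_corootr pmulr_rlt0 ?divr_gt0 // => ht_lt0.
have [a a_def] := root_pairing_int hPhi tPhi.
have [b b_def] := root_pairing_int tPhi hPhi.
have a_lt0 : a < 0 by rewrite -(ltrz0 R) -a_def dot_corootl pmulr_rlt0 ?divr_gt0.
have b_lt0 : b < 0.
  by rewrite -(ltrz0 R) -b_def dot_corootl (dotC t h) pmulr_rlt0 ?divr_gt0.
have ab_lt4 : a * b < 4.
  have ab_eq : (a * b)%:~R * (dot h h * dot t t) = 4 * (dot h t * dot h t) :> R.
    rewrite intrM -a_def -b_def !dot_corootl (dotC t h).
    by field; rewrite !lt0r_neq0.
  rewrite -(ltr_int R) -(ltr_pM2r (mulr_gt0 hh_gt0 tt_gt0)) ab_eq.
  by rewrite ltr_pM2l ?root_cauchy_schwarz.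
have [a1|b1] := int_neg_prod_lt4 a_lt0 b_lt0 ab_lt4.
  exists (refl t h); first exact: refl_root.
  by rewrite coroot_refl ?root_nz // reflE dotC a_def a1 scaleN1r opprK.
exists (refl h t); first exact: refl_root.
by rewrite coroot_refl ?root_nz // reflE dotC b_def b1 scaleN1r opprK addrC.
Qed.

Lemma csum_merge h t g : root_word (h :: g) -> t \in g -> dot h (coroot t) < 0 ->
  exists2 g', root_word g' & (size g' < size (h :: g))%N /\ csum g' = csum (h :: g).
Proof.
case/andP=> hPhi /allP gPhi tg ht_lt0; have tPhi := gPhi t tg.
have g_rem : root_word (rem t g) by apply/allP => u /mem_rem /gPhi.
have size_rem : size (rem t g) = (size g).-1 by rewrite size_rem.
have g_pos : (0 < size g)%N by case: (g) tg.
have csum_ht : csum (h :: g) = coroot h + coroot t + csum (rem t g).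
  by rewrite /csum big_cons (perm_big _ (perm_to_rem tg)) big_cons addrA.
have [t_opp|t_neq] := eqVneq t (- h).
  exists (rem t g) => //; split; first by rewrite size_rem /= prednK // ltnW.
  by rewrite csum_ht t_opp corootN subrr add0r.
have [d dPhi coroot_d] := coroot_add hPhi tPhi t_neq ht_lt0.
exists (d :: rem t g); first by rewrite /= dPhi.
split; first by rewrite /= size_rem prednK.
by rewrite csum_ht /csum big_cons coroot_d.
Qed.

Lemma csum_normal_form g : root_word g -> csum g != 0 ->
  exists h tl, [/\ root_word (h :: tl), (size tl < size g)%N,
     csum (h :: tl) = csum g & forall t, t \in tl -> 0 <= dot h (coroot t)].
Proof.
move: {2}(size g) (leqnn (size g)) => N; elim: N g => [|N IH] [|h tl] //=;
  try by rewrite /csum big_nil eqxx.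
rewrite ltnS => size_tl gPhi csum_nz.
have [/hasP[t tl_t ht_lt0]|/hasPn tl_pos] := boolP (has (fun t => dot h (coroot t) < 0) tl).
  have [g' g'Phi [size_g' csum_g']] := csum_merge gPhi tl_t ht_lt0.
  have size_g'N : (size g' <= N)%N by apply: leq_trans size_tl.
  have csum_g'_nz : csum g' != 0 by rewrite csum_g'.
  have [h' [tl' [nf_Phi size_tl' nf_csum nf_pos]]] := IH g' size_g'N g'Phi csum_g'_nz.
  by exists h', tl'; split; rewrite -?csum_g' // (ltn_trans size_tl').
by exists h, tl; split => // t /tl_pos; rewrite -leNgt.
Qed.

End RootSystem.

Section CorootLattice.
Variables (R : realFieldType) (n : nat) (Phi : seq 'rV[R]_n) (alpha : 'I_n -> 'rV[R]_n).
Hypothesis rsPhi : is_root_system Phi.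
Hypothesis alphaPhi : forall i, alpha i \in Phi.
Local Notation V := 'rV[R]_n.
Local Notation coroot := (@coroot R n).
Local Notation csum := (@csum R n).
Local Notation root_word := (root_word Phi).

Lemma in_coroot_latticeB (lam mu : V) : in_coroot_lattice alpha lam ->
  in_coroot_lattice alpha mu -> in_coroot_lattice alpha (lam - mu).
Proof.
move=> [k ->] [k' ->]; exists (fun i => k i - k' i).
by rewrite -sumrB; apply: eq_bigr => i _; rewrite mulrzBr.
Qed.

Lemma csum_cat g1 g2 : csum (g1 ++ g2) = csum g1 + csum g2.
Proof. by rewrite /csum big_cat. Qed.

Lemma csum_nseq (b : V) k : csum (nseq k b) = coroot b *+ k.
Proof. by elim: k => [|k IH]; rewrite /csum ?big_nil // big_cons -/(csum _) IH mulrS. Qed.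

Lemma csum_coroot_mulz b (z : int) : b \in Phi ->
  exists2 g, root_word g & csum g = coroot b *~ z.
Proof.
move=> bPhi; case: z => k.
  by exists (nseq k b); [apply/allP => a /nseqP[->] | rewrite csum_nseq].
exists (nseq k.+1 (- b)); first by apply/allP => a /nseqP[-> _]; apply: (opp_root rsPhi).
by rewrite csum_nseq corootN NegzE mulrNz mulNrn.
Qed.

Lemma coroot_lattice_csum (lam : V) : in_coroot_lattice alpha lam ->
  exists2 g, root_word g & csum g = lam.
Proof.
case=> k ->.
suff csum_partial r : exists2 g, root_word g & csum g = \sum_(i <- r) coroot (alpha i) *~ k i.
  exact: csum_partial.
elim: r => [|i r [g gPhi csum_g]]; first by exists [::]; rewrite // /csum !big_nil.
have [g1 g1Phi csum_g1] := csum_coroot_mulz (k i) (alphaPhi i).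
exists (g1 ++ g); first exact: root_word_cat.
by rewrite csum_cat big_cons csum_g1 csum_g.
Qed.

End CorootLattice.

Definition dominant (R : realFieldType) (n : nat) (alpha : 'I_n -> 'rV[R]_n)
  (x : 'rV[R]_n) : Prop := forall i, 0 < dot (alpha i) x.

Lemma alcove_dominant (R : realFieldType) (n : nat) (alpha : 'I_n -> 'rV[R]_n)
  (amax x : 'rV[R]_n) : in_alcove alpha amax x -> dominant alpha x.
Proof. by case. Qed.

Section SimpleRoots.
Variables (R : realFieldType) (n : nat) (Phi : seq 'rV[R]_n) (alpha : 'I_n -> 'rV[R]_n).
Hypothesis rsPhi : is_root_system Phi.
Hypothesis alpha_simple : simple_roots Phi alpha.
Local Notation dot := (@dot R n).
Local Notation coroot := (@coroot R n).
Local Notation refl := (@refl R n).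
Local Notation dominant := (dominant alpha).
Local Notation combi c := (\sum_(j < n) alpha j *~ c j).

Lemma alpha_root i : alpha i \in Phi.
Proof. by case: alpha_simple. Qed.

Lemma alpha_nz i : alpha i != 0.
Proof. exact/(root_nz rsPhi)/alpha_root. Qed.

Lemma combi_inj (c d : 'I_n -> int) : combi c = combi d -> c =1 d.
Proof.
case: alpha_simple => _ free_alpha _ eq_cd i.
pose row_of (e : 'I_n -> int) : 'rV[R]_n := \row_j (e j)%:~R.
have row_ofE e : row_of e *m \matrix_j alpha j = combi e.
  by rewrite mulmx_sum_row; apply: eq_bigr => j _; rewrite rowK mxE scaler_int.
have /rowP/(_ i) : row_of c = row_of d.
  by apply: (row_free_inj free_alpha); rewrite /= !row_ofE.
by rewrite !mxE => /intr_inj.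
Qed.

Lemma combi_single (c : 'I_n -> int) i : (forall j, j != i -> c j = 0) ->
  combi c = alpha i *~ c i.
Proof. by move=> c0; rewrite (bigD1 i) //= big1 ?addr0 // => j /c0 ->; rewrite mulr0z. Qed.

Lemma combiN (c : 'I_n -> int) : - combi c = combi (fun j => - c j).
Proof. by rewrite -sumrN; apply: eq_bigr => j _; rewrite mulrNz. Qed.

Lemma dot_combi (c : 'I_n -> int) x : dot (combi c) x = \sum_(j < n) dot (alpha j) x *~ c j.
Proof. by rewrite dot_suml; apply: eq_bigr => j _; rewrite dotzl. Qed.

Lemma combi_pos (c : 'I_n -> int) x : dominant x -> (forall j, 0 <= c j) ->
  combi c != 0 -> 0 < dot (combi c) x.
Proof.
move=> x_dom c_ge0 c_nz; rewrite dot_combi lt_def.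
have terms_ge0 (j : 'I_n) : true -> 0 <= dot (alpha j) x *~ c j.
  by move=> _; rewrite mulrz_ge0 // ltW.
rewrite sumr_ge0 // andbT; apply: contraNneq c_nz => /(psumr_eq0P terms_ge0) c0.
rewrite big1 // => j _; have /eqP := c0 j isT.
by rewrite mulrz_eq0 (gt_eqF (x_dom j)) orbF => /eqP ->; rewrite mulr0z.
Qed.

Lemma root_sign b x : b \in Phi -> dominant x ->
  exists2 c : 'I_n -> int, b = combi c &
   ((forall j, 0 <= c j) /\ 0 < dot b x) \/ ((forall j, c j <= 0) /\ dot b x < 0).
Proof.
move=> bPhi x_dom; case: alpha_simple => _ _ /(_ b bPhi) [c [b_eq [c_ge0|c_le0]]].
  by exists c => //; left; split; rewrite // b_eq combi_pos // -b_eq (root_nz rsPhi).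
exists c => //; right; split => //.
have nb_eq : - b = combi (fun j => - c j) by rewrite b_eq combiN.
rewrite -oppr_gt0 -dotNl nb_eq combi_pos // => [j|]; first by rewrite oppr_ge0.
by rewrite -nb_eq oppr_eq0 (root_nz rsPhi).
Qed.

Lemma root_dot_neq0 b x : b \in Phi -> dominant x -> dot b x != 0.
Proof. by move=> bPhi x_dom; have [c _ [[_ /gt_eqF->]|[_ /lt_eqF->]]] := root_sign bPhi x_dom. Qed.

Lemma pos_root_combi b x : b \in Phi -> dominant x -> 0 < dot b x ->
  exists2 c : 'I_n -> int, b = combi c & forall j, 0 <= c j.
Proof.
move=> bPhi x_dom b_pos; have [c b_eq [[c_ge0 _]|[_ b_neg]]] := root_sign bPhi x_dom.
  by exists c.
by move: b_pos; rewrite (lt_gtF b_neg).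
Qed.

Lemma refl_alpha_combi i b (c : 'I_n -> int) (m : int) :
  dot (coroot (alpha i)) b = m%:~R -> b = combi c ->
  refl (alpha i) b = combi (fun j => c j - m *+ (j == i)).
Proof.
move=> m_def b_eq; rewrite /Defs.refl m_def scaler_int b_eq.
rewrite [RHS](eq_bigr (fun j => alpha j *~ c j - alpha j *~ (m *+ (j == i)))).
  rewrite sumrB (@combi_single (fun j => m *+ (j == i)) i) ?eqxx //.
  by move=> j /negbTE ->.
by move=> j _; rewrite mulrzBr.
Qed.

Lemma refl_alpha_pos i b x : b \in Phi -> dominant x -> 0 < dot b x -> b != alpha i ->
  0 < dot (refl (alpha i) b) x.
Proof.
move=> bPhi x_dom b_pos b_neq.
have sbPhi : refl (alpha i) b \in Phi by exact: (refl_root rsPhi (alpha_root i) bPhi).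
have [c b_eq c_ge0] := pos_root_combi bPhi x_dom b_pos.
have [m m_def] := root_pairing_int rsPhi (alpha_root i) bPhi.
have [d sb_eq [[_ //]|[d_le0 _]]] := root_sign sbPhi x_dom.
have cd := combi_inj (etrans (esym (refl_alpha_combi m_def b_eq)) sb_eq).
have c_single j : j != i -> c j = 0.
  move=> ji; apply/eqP; rewrite eq_le c_ge0 andbT.
  by have := d_le0 j; rewrite -cd (negbTE ji) subr0.
have b_mul : b = (c i)%:~R *: alpha i by rewrite b_eq (combi_single c_single) scaler_int.
have [ci1|ciN1] : (c i)%:~R = 1 :> R \/ (c i)%:~R = -1 :> R.
  by apply: (root_reduced rsPhi (alpha_root i)); rewrite -b_mul.
  by move: b_neq; rewrite b_mul ci1 scale1r eqxx.
by have := c_ge0 i; rewrite -(ler0z R) ciN1 oppr_ge0 ler10.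
Qed.

Lemma pos_root_simple_pairing b (c : 'I_n -> int) : b \in Phi -> b = combi c ->
  (forall j, 0 <= c j) -> exists i, 0 < dot (alpha i) b.
Proof.
move=> bPhi b_eq c_ge0; apply/existsP; apply: contraT; rewrite negb_exists => /forallP le0.
have : \sum_(j < n) dot (alpha j) b *~ c j <= 0.
  apply: sumr_le0 => j _; rewrite -oppr_ge0 -mulNrz mulrz_ge0 //.
  by rewrite oppr_ge0 leNgt le0.
by rewrite -dot_combi -b_eq leNgt (root_norm_gt0 rsPhi bPhi).
Qed.

End SimpleRoots.

Definition simple_act (R : realFieldType) (n : nat) (alpha : 'I_n -> 'rV[R]_n)
  (l : seq 'I_n) : 'rV[R]_n -> 'rV[R]_n := weyl_act (map alpha l).

(* Positivity is measured at a fixed dominant point [x0]. *)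
Section SimpleWords.
Variables (R : realFieldType) (n : nat) (Phi : seq 'rV[R]_n) (alpha : 'I_n -> 'rV[R]_n).
Hypothesis rsPhi : is_root_system Phi.
Hypothesis alpha_simple : simple_roots Phi alpha.
Variable x0 : 'rV[R]_n.
Hypothesis x0_dom : dominant alpha x0.
Local Notation V := 'rV[R]_n.
Local Notation dot := (@dot R n).
Local Notation coroot := (@coroot R n).
Local Notation refl := (@refl R n).
Local Notation wa := (@weyl_act R n).
Local Notation sact := (simple_act alpha).
Local Notation combi c := (\sum_(j < n) alpha j *~ c j).

Let alphaPhi := alpha_root alpha_simple.
Let alpha_neq0 := alpha_nz rsPhi alpha_simple.

Lemma simple_act_cons i l (q : V) : sact (i :: l) q = refl (alpha i) (sact l q).
Proof. by []. Qed.

Lemma simple_act_cat l1 l2 (q : V) : sact (l1 ++ l2) q = sact l1 (sact l2 q).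
Proof. by rewrite /simple_act map_cat wa_cat. Qed.

Lemma simple_act_rcons l j (q : V) : sact (rcons l j) q = sact l (refl (alpha j) q).
Proof. by rewrite -cats1 simple_act_cat. Qed.

Lemma simple_word_root l : root_word Phi (map alpha l).
Proof. by apply/allP => _ /mapP[i _ ->]; apply: alphaPhi. Qed.

Lemma simple_act_root l b : b \in Phi -> sact l b \in Phi.
Proof. exact/wa_root/simple_word_root. Qed.

(* The reflection in a positive root is a word in simple reflections, by
   induction on the height [\sum_j c j] of the root. *)
Lemma refl_pos_simple_word N b (c : 'I_n -> int) : b \in Phi -> b = combi c ->
  (forall j, 0 <= c j) -> \sum_(j < n) c j < N%:Z ->
  exists l, refl b =1 sact l.
Proof.
elim: N b c => [|N IH] b c bPhi b_eq c_ge0 height_lt.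
  by move: height_lt; rewrite ltNge sumr_ge0.
case: (boolP [exists i, b == alpha i]) => [/existsP[i /eqP ->]|b_nsimple].
  by exists [:: i].
have [i ib_pos] := pos_root_simple_pairing rsPhi bPhi b_eq c_ge0.
have b_neq : b != alpha i by apply: contraNneq b_nsimple => ->; apply/existsP; exists i.
have [m m_def] := root_pairing_int rsPhi (alphaPhi i) bPhi.
have m_gt0 : 0 < m.
  by rewrite -(ltr0z R) -m_def dot_corootl mulr_gt0 ?divr_gt0 ?dot_gt0.
have b_pos : 0 < dot b x0 by rewrite b_eq combi_pos // -b_eq (root_nz rsPhi).
have sbPhi := refl_root rsPhi (alphaPhi i) bPhi.
have [d sb_eq d_ge0] :=
  pos_root_combi rsPhi alpha_simple sbPhi x0_dom (refl_alpha_pos rsPhi alpha_simple bPhi x0_dom b_pos b_neq).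
have d_eq := combi_inj alpha_simple (etrans (esym sb_eq) (refl_alpha_combi m_def b_eq)).
have [l sb_word] : exists l, refl (refl (alpha i) b) =1 sact l.
  apply: (IH _ d sbPhi sb_eq d_ge0).
  have delta_sum : \sum_(j < n) m *+ (j == i) = m.
    by rewrite (bigD1 i) //= eqxx big1 => [|j /negbTE->]; rewrite ?addr0.
  rewrite (eq_bigr _ (fun j _ => d_eq j)) sumrB delta_sum ltrBlDr.
  apply: (lt_le_trans height_lt).
  by rewrite -addn1 PoszD lerD2l.
exists (i :: l ++ [:: i]) => q.
have b_conj : refl b q = refl (alpha i) (refl (refl (alpha i) b) (refl (alpha i) q)).
  by rewrite -refl_conj // !reflK.
by rewrite b_conj sb_word /simple_act /= map_cat wa_cat.
Qed.

Lemma refl_simple_word b : b \in Phi -> exists l, refl b =1 sact l.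
Proof.
move=> bPhi; have [c b_eq [[c_ge0 _]|[c_le0 _]]] := root_sign rsPhi alpha_simple bPhi x0_dom.
  apply: (refl_pos_simple_word (N := (absz (\sum_(j < n) c j)).+1) bPhi b_eq c_ge0).
  by rewrite -addn1 PoszD gez0_abs ?sumr_ge0 // ltrDl.
have nb_eq : - b = combi (fun j => - c j) by rewrite b_eq combiN.
have nc_ge0 j : 0 <= - c j by rewrite oppr_ge0.
have [|l nb_word] := refl_pos_simple_word
  (N := (absz (\sum_(j < n) - c j)).+1) (opp_root rsPhi bPhi) nb_eq nc_ge0.
  by rewrite -addn1 PoszD gez0_abs ?sumr_ge0 // ltrDl.
by exists l => q; rewrite -refl_negroot.
Qed.

Lemma weyl_simple_word s : root_word Phi s -> exists l, wa s =1 sact l.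
Proof.
elim: s => [|a s IH] /=; first by exists [::].
case/andP=> aPhi /IH[l2 s_word]; have [l1 a_word] := refl_simple_word aPhi.
by exists (l1 ++ l2) => q; rewrite simple_act_cat -s_word -a_word.
Qed.

Lemma simple_word_delete l j : dot (sact l (alpha j)) x0 < 0 ->
  exists2 l', (size l' < size l)%N & forall q, sact l' q = sact l (refl (alpha j) q).
Proof.
elim: l => [|i l IH] neg; first by move: neg; rewrite (lt_gtF (x0_dom j)).
have rPhi : sact l (alpha j) \in Phi by apply/simple_act_root/alphaPhi.
have [r_neg|r_ge0] := ltP (dot (sact l (alpha j)) x0) 0.
  by have [l' size_l' l'_eq] := IH r_neg; exists (i :: l') => // q; rewrite !simple_act_cons l'_eq.
have r_pos : 0 < dot (sact l (alpha j)) x0.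
  by rewrite lt_def r_ge0 andbT (root_dot_neq0 rsPhi alpha_simple rPhi x0_dom).
have r_eq : sact l (alpha j) = alpha i.
  apply/eqP; apply: contraTT neg => r_neq; rewrite -leNgt ltW //.
  exact: (refl_alpha_pos rsPhi alpha_simple rPhi x0_dom r_pos r_neq).
exists l => // q; rewrite simple_act_cons /simple_act -wa_conj.
  by rewrite -/(sact l (alpha j)) r_eq reflK.
exact: (root_word_nonzero rsPhi (simple_word_root l)).
Qed.

Lemma simple_act_chamber l : (forall j, 0 < dot (sact l (alpha j)) x0) -> sact l =1 id.
Proof.
move: {2}(size l) (leqnn (size l)) => N.
elim: N l => [|N IH] l; case/lastP: l => [|l j] size_l all_pos q //.
  by rewrite size_rcons in size_l.
rewrite size_rcons ltnS in size_l.
have l_neg : dot (sact l (alpha j)) x0 < 0.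
  by have := all_pos j; rewrite simple_act_rcons refl_self // /simple_act waN dotNl oppr_gt0.
have [l' size_l' l'_eq] := simple_word_delete l_neg.
have l'_rcons q' : sact l' q' = sact (rcons l j) q' by rewrite l'_eq simple_act_rcons.
rewrite -l'_rcons; apply: IH; first exact: ltnW (leq_trans size_l' size_l).
by move=> j'; rewrite l'_rcons.
Qed.

Lemma simple_act_dot_le l x : dominant alpha x -> dot x0 (sact l x) <= dot x0 x.
Proof.
move=> x_dom; move: {2}(size l) (leqnn (size l)) => N.
elim: N l => [|N IH] l size_l.
  by case: l size_l.
have [all_pos|] := boolP [forall j, 0 < dot (sact l (alpha j)) x0].
  by rewrite simple_act_chamber //; apply/forallP.
rewrite negb_forall => /existsP[j l_nneg].
have rPhi : sact l (alpha j) \in Phi by apply/simple_act_root/alphaPhi.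
have l_neg : dot (sact l (alpha j)) x0 < 0.
  by rewrite lt_neqAle (root_dot_neq0 rsPhi alpha_simple rPhi x0_dom) leNgt l_nneg.
have [l' size_l' l'_eq] := simple_word_delete l_neg.
have l_eq q : sact l q = sact l' (refl (alpha j) q) by rewrite l'_eq reflK.
have l'_alpha : sact l' (alpha j) = - sact l (alpha j) by rewrite l'_eq refl_self // /simple_act waN.
rewrite l_eq /Defs.refl /simple_act waB waZ dotBr dotZr -/(sact l' (alpha j)) -/(sact l' x) l'_alpha.
apply: le_trans (IH l' _); last exact: leq_trans size_l' size_l.
rewrite gerBl; apply: mulr_ge0.
  by rewrite dot_corootl mulr_ge0 ?divr_ge0 ?dot_ge0 // ltW.
by rewrite dotNr oppr_ge0 dotC ltW.
Qed.

End SimpleWords.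

Lemma weyl_dot_le (R : realFieldType) (n : nat) (Phi : seq 'rV[R]_n)
    (alpha : 'I_n -> 'rV[R]_n) s (x x' : 'rV[R]_n) :
  is_root_system Phi -> simple_roots Phi alpha -> root_word Phi s ->
  dominant alpha x -> dominant alpha x' -> dot x (weyl_act s x') <= dot x x'.
Proof.
move=> rsPhi alpha_simple sPhi x_dom x'_dom.
have [l ->] := weyl_simple_word rsPhi alpha_simple x_dom sPhi.
exact: (simple_act_dot_le rsPhi alpha_simple x_dom _ x'_dom).
Qed.

(* Every root takes values in (-1, 1) on the alcove, since the highest root
   dominates all roots and is smaller than 1 there. *)
Section AlcoveBounds.
Variables (R : realFieldType) (n : nat) (Phi : seq 'rV[R]_n)
    (alpha : 'I_n -> 'rV[R]_n) (amax : 'rV[R]_n).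
Hypothesis rsPhi : is_root_system Phi.
Hypothesis amax_highest : highest_root Phi alpha amax.
Local Notation dot := (@dot R n).

Lemma root_lt1_alcove b x : b \in Phi -> in_alcove alpha amax x -> dot b x < 1.
Proof.
move=> bPhi [x_dom amax_lt1]; have [_ /(_ b bPhi) [d [d_ge0 amax_b]]] := amax_highest.
have : 0 <= dot (amax - b) x.
  rewrite amax_b dot_suml; apply: sumr_ge0 => i _.
  by rewrite dotzl mulrz_ge0 // ltW.
rewrite dotBl subr_ge0 => /le_lt_trans; apply.
by move: amax_lt1; rewrite dotNl addrC subr_gt0.
Qed.

Lemma root_gtN1_alcove b x : b \in Phi -> in_alcove alpha amax x -> -1 < dot b x.
Proof.
by move=> bPhi x_alc; have := root_lt1_alcove (opp_root rsPhi bPhi) x_alc; rewrite dotNl ltrNl.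
Qed.

End AlcoveBounds.

Definition sqdist (R : realFieldType) (n : nat) (u v : 'rV[R]_n) : R := dot (u - v) (u - v).

(* A translated point [w x' + lambda] with
   [lambda <> 0] lies beyond some affine wall [<h, .> = 1], and reflecting in
   that wall brings it closer to [x] while shortening [lambda]. *)
Section AffineOrbit.
Variables (R : realFieldType) (n : nat) (Phi : seq 'rV[R]_n)
    (alpha : 'I_n -> 'rV[R]_n) (amax x x' : 'rV[R]_n).
Hypothesis rsPhi : is_root_system Phi.
Hypothesis alpha_simple : simple_roots Phi alpha.
Hypothesis amax_highest : highest_root Phi alpha amax.
Hypothesis x_alc : in_alcove alpha amax x.
Hypothesis x'_alc : in_alcove alpha amax x'.
Local Notation V := 'rV[R]_n.
Local Notation dot := (@dot R n).
Local Notation coroot := (@coroot R n).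
Local Notation refl := (@refl R n).
Local Notation wa := (@weyl_act R n).
Local Notation csum := (@csum R n).
Local Notation root_word := (root_word Phi).

Lemma sqdistE (u v : V) : sqdist u v = dot u u + dot v v - (dot u v + dot u v).
Proof. by rewrite /sqdist dotBl !dotBr (dotC v u) opprB addrACA opprD. Qed.

Lemma sqdist_weyl u : root_word u -> sqdist x x' <= sqdist x (wa u x').
Proof.
move=> uPhi; have u_nz := root_word_nonzero rsPhi uPhi.
rewrite !sqdistE dot_wa // lerD2l lerN2.
have wx'_le := weyl_dot_le rsPhi alpha_simple uPhi
  (alcove_dominant x_alc) (alcove_dominant x'_alc).
exact: lerD.
Qed.

Lemma affine_refl_closer h z : h \in Phi -> 1 < dot h z ->
  sqdist x (refl h z + coroot h) < sqdist x z.
Proof.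
move=> hPhi hz_gt1.
have hx_lt1 := root_lt1_alcove amax_highest hPhi x_alc.
have hh_gt0 := root_norm_gt0 rsPhi hPhi.
pose r := 2 / dot h h; have r_gt0 : 0 < r by rewrite divr_gt0.
have cc : dot (coroot h) (coroot h) = r * 2.
  by rewrite dot_corootl dotC dot_coroot_self ?(root_nz rsPhi).
have xzc : dot (x - z) (coroot h) = r * (dot h x - dot h z).
  by rewrite dot_corootr dotBl !(dotC _ h).
rewrite /sqdist.
have -> : x - (refl h z + coroot h) = (x - z) + (dot h z - 1) *: coroot h.
  by rewrite reflE scalerBl scale1r opprD opprB addrA addrCA addrAC addrC.
rewrite dot_add_scale -[X in _ < X]addr0 ltrD2l pmulr_rlt0 ?subr_gt0 //.
have -> : 2 * dot (x - z) (coroot h) + (dot h z - 1) * dot (coroot h) (coroot h)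
          = 2 * r * (dot h x - 1) by rewrite cc xzc; ring.
by rewrite pmulr_rlt0 ?subr_lt0 //; apply: mulr_gt0.
Qed.

Lemma affine_descent u g : root_word u -> root_word g -> csum g != 0 ->
  exists u' g', [/\ root_word u', root_word g', (size g' < size g)%N &
    sqdist x (wa u' x' + csum g') < sqdist x (wa u x' + csum g)].
Proof.
move=> uPhi gPhi csum_nz.
have [h [tl [/andP[hPhi tlPhi] size_tl csum_htl tl_pos]]] := csum_normal_form rsPhi gPhi csum_nz.
have h_nz := root_nz rsPhi hPhi.
have hg_ge2 : 2 <= dot h (csum g).
  rewrite -csum_htl /csum big_cons dotDr dotC dot_coroot_self // lerDl.
  by rewrite dot_sumr big_seq sumr_ge0.
have hux_gtN1 : -1 < dot h (wa u x').
  rewrite dotC dot_wa_sym dotC; apply: (root_gtN1_alcove rsPhi amax_highest _ x'_alc).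
  exact/wa_root/hPhi/root_word_rev.
have hz_gt1 : 1 < dot h (wa u x' + csum g).
  have -> : 1 = -1 + 2 :> R by rewrite mulr2n addKr.
  by rewrite dotDr ltr_leD.
have hword : root_word [:: h] by rewrite /root_word /= hPhi.
exists (h :: u), (map (refl h) tl); split; rewrite ?size_map //.
- by rewrite /root_word /= hPhi.
- exact: (root_word_map rsPhi hword tlPhi).
have h_word_nz : nonzero_word [:: h] by rewrite /nonzero_word /= h_nz.
have -> : wa (h :: u) x' + csum (map (refl h) tl) = refl h (wa u x' + csum g) + coroot h.
  rewrite -csum_htl /csum big_cons -/(csum tl) !reflD refl_coroot_self //.
  rewrite -[refl h (csum tl)]/(wa [:: h] (csum tl)) (csum_wa tl h_word_nz).
  by rewrite [- _ + _]addrC addrA subrK.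
exact: affine_refl_closer.
Qed.

Lemma sqdist_affine_le u g : root_word u -> root_word g ->
  sqdist x x' <= sqdist x (wa u x' + csum g).
Proof.
move: {2}(size g) (leqnn (size g)) => N; elim: N u g => [|N IH] u g size_g uPhi gPhi.
  by case: g size_g gPhi => // _ _; rewrite /csum big_nil addr0 sqdist_weyl.
have [csum0|csum_nz] := eqVneq (csum g) 0; first by rewrite csum0 addr0 sqdist_weyl.
have [u' [g' [u'Phi g'Phi size_g' closer]]] := affine_descent uPhi gPhi csum_nz.
by rewrite ltW // (le_lt_trans _ closer) // IH // -ltnS (leq_trans size_g').
Qed.

Lemma sqdist_affine_lt u g : root_word u -> root_word g -> csum g != 0 ->
  sqdist x x' < sqdist x (wa u x' + csum g).
Proof.
move=> uPhi gPhi csum_nz.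
have [u' [g' [u'Phi g'Phi _ closer]]] := affine_descent uPhi gPhi csum_nz.
exact: le_lt_trans (sqdist_affine_le u'Phi g'Phi) closer.
Qed.

End AffineOrbit.

Lemma in_X_word (R : realFieldType) (n : nat) (Phi : seq 'rV[R]_n)
    (alpha : 'I_n -> 'rV[R]_n) (amax z : 'rV[R]_n) :
  in_X Phi alpha amax z -> exists s x,
    [/\ root_word Phi s, in_alcove alpha amax x & weyl_act s x = x - z].
Proof.
by case=> w [s sPhi w_s] [x x_alc z_eq]; exists s, x; split; rewrite // z_eq subKr w_s.
Qed.

Lemma weyl_translate_identity (R : realFieldType) (n : nat) (s s' : seq 'rV[R]_n)
    (x x' y lam mu : 'rV[R]_n) : nonzero_word s ->
  weyl_act s x = x - (y - lam) -> weyl_act s' x' = x' - (y - mu) ->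
  x - (weyl_act (rev s ++ s') x' + weyl_act (rev s) (lam - mu)) =
  weyl_act (rev s) (x - x').
Proof.
move=> s_nz wx w'x'.
rewrite wa_cat -waD -{1}(waK s_nz x) -waB wx w'x'; congr (weyl_act _ _).
have -> : x' - (y - mu) + (lam - mu) = x' - (y - lam).
  by rewrite -addrA opprB [mu - y + _]addrC subrKA opprB.
by rewrite [- (x' - _)]opprD addrACA subrr addr0.
Qed.

Unset Implicit Arguments.

Theorem proposition4p5 (R : realFieldType) (n : nat) (Phi : seq 'rV[R]_n)
    (alpha : 'I_n -> 'rV[R]_n) (amax : 'rV[R]_n) :
  is_root_system Phi -> irreducible_rs Phi -> simple_roots Phi alpha ->
  highest_root Phi alpha amax ->
  forall lam mu : 'rV[R]_n,
    in_coroot_lattice alpha lam -> in_coroot_lattice alpha mu -> lam != mu ->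
    forall y : 'rV[R]_n,
      ~ (in_X Phi alpha amax (y - lam) /\ in_X Phi alpha amax (y - mu)).
Proof.
move=> rsPhi _ alpha_simple amax_highest lam mu lam_lat mu_lat lam_neq y.
case=> /in_X_word[s [x [sPhi x_alc wx]]] /in_X_word[s' [x' [s'Phi x'_alc w'x']]].
have s_nz := root_word_nonzero rsPhi sPhi; have s_rev_nz := nonzero_word_rev s_nz.
have [g gPhi csum_g] := coroot_lattice_csum rsPhi (alpha_root alpha_simple)
  (in_coroot_latticeB lam_lat mu_lat).
have translation_nz : csum (map (weyl_act (rev s)) g) != 0.
  by rewrite -csum_wa // csum_g wa_eq0 // subr_eq0.
have := sqdist_affine_lt rsPhi alpha_simple amax_highest x_alc x'_alc
  (root_word_cat (root_word_rev sPhi) s'Phi)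
  (root_word_map rsPhi (root_word_rev sPhi) gPhi) translation_nz.
rewrite /sqdist -csum_wa // csum_g (weyl_translate_identity s_nz wx w'x').
by rewrite dot_wa // ltxx.
Qed.
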